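(* If $X$ is a quasi-lattice (i.e., a $\upsilon$-quasi-lattice or a $\mu$-quasi-lattice), then $X_+$ is a proper and generating cone.
   Context: A pre-ordered Banach space is a real Banach space $X$ with a cone $X_+$ ($X_++X_+\subseteq X_+$, $\lambda X_+\subseteq X_+$ for $\lambda\ge0$; not assumed proper); $x\le y$ means $y-x\in X_+$. The cone is proper if $X_+\cap(-X_+)=\{0\}$ and generating if $X=X_+-X_+$. For $A\subseteq X$, $\upsilon(A)$ is the set of upper bounds of $A$ and $\mu(A)$ the set of minimal upper bounds ($z\in\upsilon(A)$ such that $A\le w\le z$ implies $w=z$). Let $\sigma_{x,y}(z)=\|z-x\|+\|z-y\|$. A pre-ordered Banach space with closed cone is a $\upsilon$-quasi-lattice if for all $x,y$, $\upsilon(\{x,y\})\neq\emptyset$ and there is a unique element of $\upsilon(\{x,y\})$ minimizing $\sigma_{x,y}$ on $\upsilon(\{x,y\})$; it is a $\mu$-quasi-lattice if for all $x,y$, $\mu(\{x,y\})\ne\emptyset$ and there is a unique element of $\mu(\{x,y\})$ minimizing $\sigma_{x,y}$ on $\mu(\{x,y\})$. *)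

From HB Require Import structures.
From mathcomp Require Import all_boot all_order all_algebra.
From mathcomp Require Import all_classical all_reals all_analysis.
Set Implicit Arguments. Unset Strict Implicit. Unset Printing Implicit Defensive.
Import Order.TTheory GRing.Theory Num.Theory.
Import numFieldNormedType.Exports.
Local Open Scope classical_set_scope.
Local Open Scope ring_scope.

Section PreorderedBanach.
Variables (R : realType) (X : completeNormedModType R).

Definition is_cone (C : set X) : Prop :=
  (forall x y, C x -> C y -> C (x + y)) /\
  (forall (l : R) x, 0 <= l -> C x -> C (l *: x)).

Definition cone_le (C : set X) (x y : X) : Prop := C (y - x).

Definition cone_proper (C : set X) : Prop :=
  forall x, C x -> C (- x) -> x = 0.

Definition cone_generating (C : set X) : Prop :=
  forall x, exists a b, C a /\ C b /\ x = a - b.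

Definition upper_bds (C : set X) (A : set X) : set X :=
  [set z | forall a, A a -> cone_le C a z].

Definition min_upper_bds (C : set X) (A : set X) : set X :=
  [set z | upper_bds C A z /\
           forall w, upper_bds C A w -> cone_le C w z -> w = z].

Definition sigma_xy (x y z : X) : R := `|z - x| + `|z - y|.

Definition unique_sigma_minimizer (x y : X) (S : set X) : Prop :=
  exists! z, S z /\ forall w, S w -> sigma_xy x y z <= sigma_xy x y w.

Definition upsilon_quasi_lattice (C : set X) : Prop :=
  is_cone C /\ closed C /\
  forall x y : X,
    upper_bds C [set x; y] !=set0 /\
    unique_sigma_minimizer x y (upper_bds C [set x; y]).

Definition mu_quasi_lattice (C : set X) : Prop :=
  is_cone C /\ closed C /\
  forall x y : X,
    min_upper_bds C [set x; y] !=set0 /\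
    unique_sigma_minimizer x y (min_upper_bds C [set x; y]).

End PreorderedBanach.

From HB Require Import structures.
From mathcomp Require Import all_boot all_order all_algebra.
From mathcomp Require Import all_classical all_reals all_analysis.
Set Implicit Arguments. Unset Strict Implicit. Unset Printing Implicit Defensive.
Import Order.TTheory GRing.Theory Num.Theory.
Import numFieldNormedType.Exports.
Local Open Scope classical_set_scope.
Local Open Scope ring_scope.

(* Generation: an upper bound z of {x, 0} gives x = z - (z - x) with both terms
   positive.  Properness: if x and -x are positive, then in the mu case z + x is
   an upper bound below a minimal upper bound z, so x = 0; in the upsilon case
   0 and x are both upper bounds of {x, -x} attaining the least possible value
   |x - (-x)| of sigma_{x,-x}, so uniqueness forces x = 0. *)

Section QuasiLatticeCone.
Variables (R : realType) (X : completeNormedModType R) (C : set X).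

Lemma upper_bds_generating :
  (forall x : X, upper_bds C [set x; 0] !=set0) -> cone_generating C.
Proof.
move=> ub x; have [z zub] := ub x.
exists z, (z - x); split; first by rewrite -[z]subr0; apply: zub; right.
by split; [apply: zub; left | rewrite opprB addrC subrK].
Qed.

Lemma min_upper_bds_proper (A : set X) (z : X) :
  (forall x y, C x -> C y -> C (x + y)) ->
  min_upper_bds C A z -> cone_proper C.
Proof.
move=> Cadd [zub zmin] x Cx Cnx.
have zxub : upper_bds C A (z + x).
  by move=> a Aa; rewrite /cone_le addrAC; apply: Cadd => //; apply: zub.
have : z + x = z by apply: zmin => //; rewrite /cone_le opprD addrA subrr sub0r.
by move/(congr1 (fun t => t - z)); rewrite addrAC subrr add0r.
Qed.

Lemma sigma_xy_ge (x y z : X) : `|x - y| <= sigma_xy x y z.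
Proof.
by rewrite /sigma_xy -[x - y](subrKA z) -opprB addrC distrC ler_normB.
Qed.

Lemma sigma_xy_minimizer (x y : X) (S : set X) (z : X) :
  S z -> sigma_xy x y z = `|x - y| ->
  S z /\ forall w, S w -> sigma_xy x y z <= sigma_xy x y w.
Proof. by move=> Sz ->; split=> // w _; apply: sigma_xy_ge. Qed.

Lemma upsilon_proper :
  is_cone C ->
  (forall x y : X, unique_sigma_minimizer x y (upper_bds C [set x; y])) ->
  cone_proper C.
Proof.
move=> [Cadd Cscal] uniq x Cx Cnx.
have C0 : C 0 by rewrite -(scale0r x); apply: Cscal.
have [z [_ zuniq]] := uniq x (- x).
have ub0 : upper_bds C [set x; - x] 0.
  by move=> a [->|->]; rewrite /cone_le sub0r ?opprK.
have ubx : upper_bds C [set x; - x] x.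
  by move=> a [->|->]; rewrite /cone_le ?subrr ?opprK //; apply: Cadd.
have zx : z = x.
  apply: zuniq; apply: (sigma_xy_minimizer ubx).
  by rewrite /sigma_xy subrr normr0 add0r.
have z0 : z = 0.
  apply: zuniq; apply: (sigma_xy_minimizer ub0).
  by rewrite /sigma_xy !sub0r opprK normrN -mulr2n -normrMn mulr2n.
by rewrite -zx z0.
Qed.

End QuasiLatticeCone.

Theorem proposition5p7 (R : realType) (X : completeNormedModType R) (C : set X) :
  upsilon_quasi_lattice C \/ mu_quasi_lattice C ->
  cone_proper C /\ cone_generating C.
Proof.
case=> [[cone [_ ql]] | [[Cadd _] [_ ql]]].
- split; first by apply: upsilon_proper => // x y; case: (ql x y).
  by apply: upper_bds_generating => x; case: (ql x 0).
- have [[z zmin] _] := ql 0 0.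
  split; first exact: min_upper_bds_proper zmin.
  by apply: upper_bds_generating => x; have [[w [wub _]] _] := ql x 0; exists w.
Qed.
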